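(* For every integer $L \ge 2$ and every integer $D \ge 1$ there exists a position-free decoder $\widetilde{\mathcal D}$ with $L$ Transformer blocks and embedding dimension $D$ with the following property: for every encoder $\mathcal E$ (with positional embeddings) there exists a finite input sequence $(x_1, x_2, \dots, x_n)$ with $x_1, \dots, x_n \in \mathbb R^D$ such that $\mathcal T_{\widetilde{\mathcal D}}(x_1, \dots, x_n) \neq \mathcal T_{\mathcal E}(x_1, \dots, x_n)$.
   Context: Transformer model: a Transformer with $L$ blocks and embedding dimension $D$ maps a sequence $(h_1,\dots,h_n)$ of vectors in $\mathbb R^D$ to a sequence of the same length. Each block consists of a single-head attention sublayer followed by a residual (skip) connection, then a token-wise MLP sublayer followed by a residual connection; there is no layer normalization and no $1/\sqrt D$ scaling of attention scores. The attention sublayer of block $\ell$ has matrices $\mathbf W_Q^\ell, \mathbf W_K^\ell, \mathbf W_V^\ell \in \mathbb R^{D\times D}$; with $q_i = \mathbf W_Q^\ell h_i$, $k_j = \mathbf W_K^\ell h_j$, $v_j = \mathbf W_V^\ell h_j$, its output at position $i$ is $\sum_{j \in S_i} \frac{\exp(q_i^\top k_j)}{\sum_{j' \in S_i}\exp(q_i^\top k_{j'})} v_j$, where $S_i = \{1,\dots,n\}$ for an encoder (full attention) and $S_i = \{1,\dots,i\}$ for a decoder (causal mask). A position-free encoder/decoder $\widetilde{\mathcal E}$, $\widetilde{\mathcal D}$ is applied directly to the input vectors; an encoder $\mathcal E$ (resp. decoder $\mathcal D$) with positional embeddings $p_1, p_2, \dots \in \mathbb R^D$ is defined by $\mathcal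 E(x_1,\dots,x_n) = \widetilde{\mathcal E}(x_1+p_1,\dots,x_n+p_n)$ (similarly for $\mathcal D$). Writing $\mathcal M(x_1,\dots,x_n)_i$ for the $i$-th output vector, the causal model of a Transformer $\mathcal M$ is $\mathcal T_{\mathcal M}(x_1,\dots,x_n) = (\mathcal M(x_1)_1, \mathcal M(x_1,x_2)_2, \dots, \mathcal M(x_1,\dots,x_n)_n)$. *)

From HB Require Import structures.
From mathcomp Require Import all_boot all_order all_algebra.
From mathcomp Require Import reals sequences.
Set Implicit Arguments. Unset Strict Implicit. Unset Printing Implicit Defensive.
Import Order.TTheory GRing.Theory Num.Theory.
Local Open Scope ring_scope.

Section Transformer.
Variables (R : realType) (D : nat).

Record block := Block {
  WQ : 'M[R]_D; WK : 'M[R]_D; WV : 'M[R]_D;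
  hid : nat;
  W1 : 'M[R]_(hid, D); b1 : 'cV[R]_hid;
  W2 : 'M[R]_(D, hid); b2 : 'cV[R]_D }.

Definition relu (x : R) : R := Num.max 0 x.

Definition mlp (B : block) (h : 'cV[R]_D) : 'cV[R]_D :=
  W2 B *m map_mx relu (W1 B *m h + b1 B) + b2 B.

(* attention score q_i^T k_j  (no 1/sqrt D scaling) *)
Definition score (B : block) (hi hj : 'cV[R]_D) : R :=
  ((WQ B *m hi)^T *m (WK B *m hj)) 0 0.

(* attention sublayer output at position i (0-based); causal = decoder mask:
   S_i = {0..i} if causal, all positions otherwise *)
Definition attn_at (causal : bool) (B : block) (hs : seq 'cV[R]_D) (i : nat)
  : 'cV[R]_D :=
  let hi := nth 0 hs i in
  let S := if causal then take i.+1 hs else hs in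
  let Z := \sum_(hj <- S) expR (score B hi hj) in
  \sum_(hj <- S) ((expR (score B hi hj) / Z) *: (WV B *m hj)).

Definition attention (causal : bool) (B : block) (hs : seq 'cV[R]_D)
  : seq 'cV[R]_D :=
  [seq attn_at causal B hs i | i <- iota 0 (size hs)].

Definition block_apply (causal : bool) (B : block) (hs : seq 'cV[R]_D)
  : seq 'cV[R]_D :=
  let hs' := [seq h.1 + h.2 | h <- zip hs (attention causal B hs)] in
  [seq h + mlp B h | h <- hs'].

Definition transformer (causal : bool) (Bs : seq block) (hs : seq 'cV[R]_D)
  : seq 'cV[R]_D :=
  foldl (fun acc B => block_apply causal B acc) hs Bs.

Definition pf_decoder (Bs : seq block) := transformer true Bs.
Definition pf_encoder (Bs : seq block) := transformer false Bs.

(* encoder with positional embeddings p_1, p_2, ... (p (i-1) = p_i) *)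
Definition encoder (Bs : seq block) (p : nat -> 'cV[R]_D) (xs : seq 'cV[R]_D)
  : seq 'cV[R]_D :=
  pf_encoder Bs [seq xs`_i + p i | i <- iota 0 (size xs)].

Definition causal_model (M : seq 'cV[R]_D -> seq 'cV[R]_D) (xs : seq 'cV[R]_D)
  : seq 'cV[R]_D :=
  [seq nth 0 (M (take i.+1 xs)) i | i <- iota 0 (size xs)].

End Transformer.

(* Full attention treats its input as a multiset, so an encoder is
   equivariant under permutations of its position-embedded tokens: if two
   inputs become transpositions of each other after the embeddings p_1, p_2
   are added, the encoder's outputs at position 3 agree.  A decoder whose first
   two blocks add to each token the mean of its causal prefix (all further
   blocks being the identity) does see the order: on [v + w; 0; 0] and
   [v; w; 0] its outputs at position 3 differ by w/3.  With v = p_2 - p_1 the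
   two embedded inputs are transpositions of each other. *)
From HB Require Import structures.
From mathcomp Require Import all_boot all_order all_algebra.
From mathcomp Require Import reals sequences.
From mathcomp Require Import exp lra.
Set Implicit Arguments. Unset Strict Implicit. Unset Printing Implicit Defensive.
Import Order.TTheory GRing.Theory Num.Theory.
Local Open Scope ring_scope.

Lemma exists_neq_of_separating (S T : eqType) (x0 : T) (f g : S -> seq T)
    (x1 x2 : S) i :
  nth x0 (f x1) i != nth x0 (f x2) i -> nth x0 (g x1) i = nth x0 (g x2) i ->
  exists x, f x <> g x.
Proof.
move=> f_sep g_eq.
have [fg1|] := eqVneq (f x1) (g x1); last by exists x1; apply/eqP.
have [fg2|] := eqVneq (f x2) (g x2); last by exists x2; apply/eqP.
by move: f_sep; rewrite fg1 fg2 g_eq eqxx.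
Qed.

Section Transformer.
Variables (R : realType) (D : nat).
Implicit Types (B : block R D) (Bs : seq (block R D)) (hs : seq 'cV[R]_D).

Lemma nth_causal_model (M : seq 'cV[R]_D -> seq 'cV[R]_D) xs i :
  (i < size xs)%N -> (causal_model M xs)`_i = (M (take i.+1 xs))`_i.
Proof. by move=> lt_i; rewrite (nth_map 0%N) ?size_iota ?nth_iota. Qed.

Lemma size_block_apply causal B hs : size (block_apply causal B hs) = size hs.
Proof. by rewrite /block_apply !size_map size_zip size_map size_iota minnn. Qed.

Definition full_attn B hs (hi : 'cV[R]_D) : 'cV[R]_D :=
  let Z := \sum_(hj <- hs) expR (score B hi hj) in
  \sum_(hj <- hs) ((expR (score B hi hj) / Z) *: (WV B *m hj)).

Lemma full_attn_perm B hs hs' : perm_eq hs hs' -> full_attn B hs =1 full_attn B hs'.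
Proof. by move=> hs_hs' h; rewrite /full_attn !(perm_big _ hs_hs'). Qed.

Lemma block_apply_full B hs :
  block_apply false B hs =
  map (fun h => h + full_attn B hs h + mlp B (h + full_attn B hs h)) hs.
Proof.
have attn_full : attention false B hs = map (full_attn B hs) hs.
  by rewrite /attention -[X in _ = map _ X](mkseq_nth 0 hs) -map_comp.
by rewrite /block_apply attn_full -{1}(map_id hs) zip_map -!map_comp.
Qed.

Lemma block_apply_full_permute B hs (ix : seq nat) :
  perm_eq ix (iota 0 (size hs)) ->
  block_apply false B [seq hs`_i | i <- ix] =
  [seq (block_apply false B hs)`_i | i <- ix].
Proof.
move=> ix_perm; have hs_perm : perm_eq [seq hs`_i | i <- ix] hs.
  by rewrite -[X in perm_eq _ X](mkseq_nth 0) perm_map.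
rewrite !block_apply_full -map_comp; apply/eq_in_map => i i_ix /=.
have lt_i : (i < size hs)%N by move: i_ix; rewrite (perm_mem ix_perm) mem_iota.
by rewrite (nth_map 0) // (full_attn_perm B hs_perm).
Qed.

Lemma pf_encoder_permute Bs hs (ix : seq nat) :
  perm_eq ix (iota 0 (size hs)) ->
  pf_encoder Bs [seq hs`_i | i <- ix] = [seq (pf_encoder Bs hs)`_i | i <- ix].
Proof.
rewrite /pf_encoder /transformer.
elim: Bs hs => //= B Bs IH hs ix_perm.
by rewrite block_apply_full_permute // IH // size_block_apply.
Qed.

Definition value_block (V : 'M[R]_D) : block R D :=
  @Block R D 0 0 V 0 (0 : 'M_(0, D)) 0 0 0.

Lemma mlp_value_block V h : mlp (value_block V) h = 0.
Proof. by rewrite /mlp /= mul0mx addr0. Qed.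

Lemma attn_at_value_block V hs i :
  attn_at true (value_block V) hs i =
  (size (take i.+1 hs))%:R^-1 *: \sum_(hj <- take i.+1 hs) (V *m hj).
Proof.
have score0 hi hj : score (value_block V) hi hj = 0.
  by rewrite /score /= !mul0mx trmx0 mul0mx mxE.
rewrite /attn_at /=.
have -> : \sum_(hj <- take i.+1 hs) expR (score (value_block V) hs`_i hj) =
          (size (take i.+1 hs))%:R.
  rewrite (eq_bigr (fun=> 1)) => [|hj _]; last by rewrite score0 expR0.
  by rewrite big_const_seq count_predT iter_addr_0.
rewrite scaler_sumr; apply: eq_bigr => hj _.
by rewrite score0 expR0 div1r.
Qed.

Lemma block_apply_value_block0 hs : block_apply true (value_block 0) hs = hs.
Proof.
have attn0 i : attn_at true (value_block 0) hs i = 0.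
  by rewrite attn_at_value_block big1 ?scaler0 // => hj _; rewrite mul0mx.
have attn_nseq : attention true (value_block 0) hs = nseq (size hs) 0.
  apply: (@eq_from_nth _ 0) => [|i]; rewrite size_map size_iota ?size_nseq // => lt_i.
  by rewrite (nth_map 0%N) ?size_iota // nth_nseq lt_i attn0.
rewrite /block_apply attn_nseq; elim: hs {attn0 attn_nseq} => //= h hs ->.
by rewrite mlp_value_block !addr0.
Qed.

Definition mean_decoder k : seq (block R D) :=
  value_block 1 :: value_block 1 :: nseq k (value_block 0).

Lemma pf_decoder_mean k hs :
  pf_decoder (mean_decoder k) hs =
  block_apply true (value_block 1) (block_apply true (value_block 1) hs).
Proof.
rewrite /pf_decoder /transformer /=.
by elim: k (block_apply _ _ _) => //= k IH hs'; rewrite block_apply_value_block0.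
Qed.

Lemma block_apply_value_block1_3 a b c :
  block_apply true (value_block 1) [:: a; b; c] =
  [:: a + a; b + 2^-1 *: (a + b); c + 3^-1 *: (a + b + c)].
Proof.
rewrite /block_apply /attention /= !attn_at_value_block /= !big_cons !big_nil.
by rewrite !mlp_value_block !mul1mx !addr0 !addrA invr1 scale1r.
Qed.

Lemma mean_decoder_gap k (v w : 'cV[R]_D) :
  (pf_decoder (mean_decoder k) [:: v + w; 0; 0])`_2 -
  (pf_decoder (mean_decoder k) [:: v; w; 0])`_2 = 3^-1 *: w.
Proof.
(* Rewriting the inner blocks first keeps the outer match syntactic; matching
   it up to conversion would unfold the inner block. *)
rewrite !pf_decoder_mean (block_apply_value_block1_3 (v + w)).
rewrite (block_apply_value_block1_3 v) !block_apply_value_block1_3 /=.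
by apply/matrixP => i j; rewrite !mxE; lra.
Qed.

Lemma pf_encoder_swap01 Bs (a b c : 'cV[R]_D) :
  (pf_encoder Bs [:: a; b; c])`_2 = (pf_encoder Bs [:: b; a; c])`_2.
Proof.
by rewrite (@pf_encoder_permute Bs [:: a; b; c] [:: 1%N; 0%N; 2%N]) //= (nth_map 0%N).
Qed.

Lemma causal_model_mean_decoder_neq k (v w : 'cV[R]_D) : w != 0 ->
  (causal_model (pf_decoder (mean_decoder k)) [:: v + w; 0; 0])`_2 !=
  (causal_model (pf_decoder (mean_decoder k)) [:: v; w; 0])`_2.
Proof.
move=> w_neq0.
rewrite [X in X != _]nth_causal_model // [X in _ != X]nth_causal_model //.
rewrite -subr_eq0 mean_decoder_gap scaler_eq0 negb_or w_neq0.
by rewrite invr_eq0 pnatr_eq0.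
Qed.

Lemma causal_model_encoder_swap01 Bs (p : nat -> 'cV[R]_D) (w : 'cV[R]_D) :
  let v := p 1%N - p 0%N in
  (causal_model (encoder Bs p) [:: v + w; 0; 0])`_2 =
  (causal_model (encoder Bs p) [:: v; w; 0])`_2.
Proof.
move=> v; rewrite [LHS]nth_causal_model // [RHS]nth_causal_model // /encoder /=.
by rewrite pf_encoder_swap01 /v !add0r subrK addrAC subrK addrC.
Qed.

End Transformer.

Theorem theorem1 (R : realType) (L D : nat) :
  (2 <= L)%N -> (1 <= D)%N ->
  exists dec : seq (block R D),
    size dec = L /\
    forall (enc : seq (block R D)) (p : nat -> 'cV[R]_D),
      exists xs : seq 'cV[R]_D,
        causal_model (pf_decoder dec) xs <> causal_model (encoder enc p) xs.
Proof.
case: D => // D le2L _; exists (mean_decoder R D.+1 (L - 2)).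
split=> [|enc p]; first by rewrite /= size_nseq -addn2 subnK.
have w_neq0 : const_mx 1 != 0 :> 'cV[R]_D.+1.
  by apply/eqP => /matrixP/(_ ord0 ord0); rewrite !mxE; apply/eqP/oner_neq0.
apply: exists_neq_of_separating (causal_model_encoder_swap01 enc p _).
exact: causal_model_mean_decoder_neq w_neq0.
Qed.
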